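(* The hyperbolic plane $\mathbb H^2$ (with its geodesic segments) is drop complete, whereas its vertical extension $\mathbb H^2\times\mathbb R$ (with the product Riemannian metric and its geodesic segments) is not drop complete.
   Context: $\mathbb H^2$ denotes the hyperbolic plane, the complete simply connected Riemannian surface of constant curvature $-1$. In a space where any two points $a,b$ are joined by a unique geodesic segment $[a,b]$, a set $K$ is convex if $[a,b]\subseteq K$ for all $a,b\in K$; $\operatorname{conv}(H)$ is the intersection of all convex sets containing $H$; and the space is drop complete if for every convex set $K$ and every point $x_0$, $\operatorname{conv}(\{x_0\}\cup K)=\bigcup\{[x_0,x]\mid x\in K\}$. The vertical extension $\mathbb H^2\times\mathbb R$ carries the product metric; its geodesic segment from $(x_0,y_0)$ to $(x_1,y_1)$ is $t\mapsto(c(t),(1-t)y_0+ty_1)$, $t\in[0,1]$, where $c$ is the constant-speed geodesic of $\mathbb H^2$ from $x_0$ to $x_1$. *)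

From Stdlib Require Import Reals.
Open Scope R_scope.

(** * Abstract framework: a space with a carrier predicate [M] on an
    ambient type [X] and a geodesic map [g a b t] (t in [0,1]) giving the
    constant-speed geodesic from a to b. *)
Section Framework.
Variable X : Type.

Definition seg (g : X -> X -> R -> X) (a b : X) (x : X) : Prop :=
  exists t, 0 <= t <= 1 /\ x = g a b t.

Definition convex (M : X -> Prop) (g : X -> X -> R -> X) (K : X -> Prop) : Prop :=
  (forall x, K x -> M x) /\
  (forall a b x, K a -> K b -> seg g a b x -> K x).

Definition conv (M : X -> Prop) (g : X -> X -> R -> X) (H : X -> Prop) (x : X) : Prop :=
  forall K, convex M g K -> (forall h, H h -> K h) -> K x.

Definition drop_complete (M : X -> Prop) (g : X -> X -> R -> X) : Prop :=
  forall (K : X -> Prop) (x0 : X),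
    convex M g K -> (exists k, K k) -> M x0 ->
    forall x, conv M g (fun y => y = x0 \/ K y) x <->
              exists y, K y /\ seg g x0 y x.
End Framework.

Arguments seg {X}. Arguments convex {X}. Arguments conv {X}.
Arguments drop_complete {X}.

Definition pt3 := (R * R * R)%type.

Definition H2 (p : pt3) : Prop :=
  let '(x, y, z) := p in z * z - x * x - y * y = 1 /\ 0 < z.

(** Lorentzian (Minkowski) bilinear form, sign chosen so that
    lor p p = 1 on H2 and cosh (dist p q) = lor p q. *)
Definition lor (p q : pt3) : R :=
  let '(x1, y1, z1) := p in let '(x2, y2, z2) := q in
  z1 * z2 - x1 * x2 - y1 * y2.

Definition arcosh (a : R) : R := ln (a + sqrt (a * a - 1)).

Definition hdist (p q : pt3) : R := arcosh (lor p q).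

Definition lincomb (a : R) (p : pt3) (b : R) (q : pt3) : pt3 :=
  let '(x1, y1, z1) := p in let '(x2, y2, z2) := q in
  (a * x1 + b * x2, a * y1 + b * y2, a * z1 + b * z2).

Definition geodH2 (p q : pt3) (t : R) : pt3 :=
  let d := hdist p q in
  if Req_EM_T d 0 then p
  else lincomb (sinh ((1 - t) * d) / sinh d) p (sinh (t * d) / sinh d) q.

Definition H2R (P : pt3 * R) : Prop := H2 (fst P).

Definition geodH2R (P Q : pt3 * R) (t : R) : pt3 * R :=
  (geodH2 (fst P) (fst Q) t, (1 - t) * snd P + t * snd Q).

From Stdlib Require Import Reals Lra Psatz.
Open Scope R_scope.

(** We work in the hyperboloid model: H^2 is the upper sheet of <p,p> = 1 for
    the Lorentz form <.,.> = [lor] on R^3.  The central fact is that a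
    geodesic segment [p,q] of H^2 is exactly the set of points of H^2 that
    are nonnegative combinations a p + b q ([seg_H2_iff]); it rests on the
    reverse Cauchy-Schwarz inequality <p,q> >= 1 and the addition formula
    for sinh.  Hence, for x0 in H^2 and K convex, a point on a segment joining
    points of [x0,y1] and [x0,y2] (y1, y2 in K) is a combination
    l x0 + m y1 + n y2 with nonnegative weights; rescaling m y1 + n y2 to a
    point w of [y1,y2] (a subset of K) puts it on [x0,w].  So the drop of K
    from x0, the union of the segments [x0,y], is convex, and drop
    completeness follows by a general argument on hulls.
    In H^2 x R take x0 = (o,1) and K = [a,b] x {0}.  The midpoint of the
    midpoints of [x0,(a,0)] and [x0,(b,0)] lies in the hull at height 1/2, so
    a segment [x0,(y,0)] through it passes there at time 1/2; comparing
    coordinates then forces y to be an affine combination of a and b with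
    positive weights, which is impossible on a chord of the hyperboloid. *)

Definition drop {X : Type} (g : X -> X -> R -> X) (x0 : X) (K : X -> Prop)
  (x : X) : Prop :=
  exists y, K y /\ seg g x0 y x.

Lemma drop_sub_convex {X : Type} (M : X -> Prop) g (x0 : X) K K' x :
  convex M g K' -> K' x0 -> (forall y, K y -> K' y) -> drop g x0 K x -> K' x.
Proof.
  intros [_ K'c] K'x0 sub [y [Ky sy]].
  exact (K'c x0 y x K'x0 (sub y Ky) sy).
Qed.

Lemma drop_complete_of_drop_convex {X : Type} (M : X -> Prop) g :
  (forall a b, M a -> M b -> g a b 0 = a /\ g a b 1 = b) ->
  (forall K x0, convex M g K -> M x0 -> convex M g (drop g x0 K)) ->
  drop_complete M g.
Proof.
  intros ends drop_cvx K x0 Kc [k Kk] Mx0 x. split.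
  - intro hull. apply hull; [now apply drop_cvx|].
    intros h [-> | Kh].
    + exists k. split; [exact Kk|]. exists 0. split; [lra|].
      symmetry. apply ends; [exact Mx0 | exact (proj1 Kc k Kk)].
    + exists h. split; [exact Kh|]. exists 1. split; [lra|].
      symmetry. apply ends; [exact Mx0 | exact (proj1 Kc h Kh)].
  - intros dx K' K'c sub.
    apply (drop_sub_convex M g x0 K K'); auto.
Qed.

Lemma conv_two_step {X : Type} (M : X -> Prop) g (H : X -> Prop) x0 a b u v x :
  H x0 -> H a -> H b -> seg g x0 a u -> seg g x0 b v -> seg g u v x ->
  conv M g H x.
Proof.
  intros Hx0 Ha Hb su sv sx K [_ Kc] sub.
  apply (Kc u v); [apply (Kc x0 a) | apply (Kc x0 b) |]; auto.
Qed.

Lemma Rdiv_nonneg a b : 0 <= a -> 0 < b -> 0 <= a / b.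
Proof.
  intros ha hb. unfold Rdiv. apply Rmult_le_pos; [exact ha|].
  left. apply Rinv_0_lt_compat. exact hb.
Qed.

Lemma lor_sym p q : lor p q = lor q p.
Proof. destruct p as [[? ?] ?], q as [[? ?] ?]; simpl; ring. Qed.

Lemma lor_lincomb_r a p b q u :
  lor u (lincomb a p b q) = a * lor u p + b * lor u q.
Proof. destruct p as [[? ?] ?], q as [[? ?] ?], u as [[? ?] ?]; simpl; ring. Qed.

Lemma lor_lincomb_l a p b q u :
  lor (lincomb a p b q) u = a * lor p u + b * lor q u.
Proof. destruct p as [[? ?] ?], q as [[? ?] ?], u as [[? ?] ?]; simpl; ring. Qed.

Lemma lor_H2 p : H2 p -> lor p p = 1.
Proof. destruct p as [[? ?] ?]; simpl; intros [h _]; lra. Qed.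

Lemma lor_lincomb_self a p b q : H2 p -> H2 q ->
  lor (lincomb a p b q) (lincomb a p b q) = a*a + b*b + 2*a*b*lor p q.
Proof.
  intros hp hq. rewrite lor_lincomb_r, !lor_lincomb_l, !lor_H2 by assumption.
  rewrite (lor_sym q p). ring.
Qed.

(** Reverse Cauchy-Schwarz on the hyperboloid, with its equality case; it is
    a Lagrange-type identity (z1 z2)^2 = u^2 + (sum of squares). *)
Lemma reverse_cauchy_schwarz p q : H2 p -> H2 q ->
  1 <= lor p q /\ (lor p q = 1 -> p = q).
Proof.
  destruct p as [[x1 y1] z1], q as [[x2 y2] z2]; simpl; intros [h1 p1] [h2 p2].
  set (u := 1 + x1*x2 + y1*y2).
  assert (lagrange : (z1*z2)*(z1*z2) =
    u*u + (x1-x2)*(x1-x2) + (y1-y2)*(y1-y2) + (x1*y2-x2*y1)*(x1*y2-x2*y1)).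
  { unfold u. replace (z1*z2*(z1*z2)) with ((z1*z1)*(z2*z2)) by ring.
    replace (z1*z1) with (1+x1*x1+y1*y1) by lra.
    replace (z2*z2) with (1+x2*x2+y2*y2) by lra. ring. }
  assert (sx : 0 <= (x1-x2)*(x1-x2)) by apply Rle_0_sqr.
  assert (sy : 0 <= (y1-y2)*(y1-y2)) by apply Rle_0_sqr.
  assert (sxy : 0 <= (x1*y2-x2*y1)*(x1*y2-x2*y1)) by apply Rle_0_sqr.
  assert (zpos : 0 < z1*z2) by nra.
  assert (u_le : u <= z1*z2) by nra.
  split; [unfold u in u_le; lra|].
  intro e. assert (Hu : u = z1*z2) by (unfold u; lra).
  assert (x1 = x2) by nra. assert (y1 = y2) by nra. subst x2 y2.
  assert (z1 = z2) by nra. subst z2. reflexivity.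
Qed.

Lemma lor_ge1 p q : H2 p -> H2 q -> 1 <= lor p q.
Proof. intros hp hq. exact (proj1 (reverse_cauchy_schwarz p q hp hq)). Qed.

Lemma lor_gt1 p q : H2 p -> H2 q -> p <> q -> 1 < lor p q.
Proof.
  intros hp hq npq. destruct (reverse_cauchy_schwarz p q hp hq) as [[lt | eq] eq1].
  - exact lt.
  - exfalso. exact (npq (eq1 (eq_sym eq))).
Qed.

(** A nonnegative combination of points of H^2 of Lorentz norm 1 is in H^2
    (positivity of the last coordinate is the point). *)
Lemma H2_lincomb a p b q : H2 p -> H2 q -> 0 <= a -> 0 <= b ->
  a*a + b*b + 2*a*b*lor p q = 1 -> H2 (lincomb a p b q).
Proof.
  intros hp hq ha hb e.
  assert (L : lor (lincomb a p b q) (lincomb a p b q) = 1)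
    by (rewrite lor_lincomb_self; auto).
  revert L. destruct p as [[x1 y1] z1], q as [[x2 y2] z2]; simpl in *.
  destruct hp as [_ p1], hq as [_ p2]. intro L. split; [lra|].
  destruct (Req_dec a 0) as [->|na].
  - assert (b <> 0) by (intro; subst; lra). nra.
  - nra.
Qed.

Lemma lincomb_H2_norm a p b q : H2 p -> H2 q -> H2 (lincomb a p b q) ->
  a*a + b*b + 2*a*b*lor p q = 1.
Proof. intros hp hq hc. rewrite <- lor_lincomb_self, lor_H2; auto. Qed.

Lemma chord_H2_endpoints p q a b : H2 p -> H2 q -> p <> q -> a + b = 1 ->
  H2 (lincomb a p b q) -> a * b = 0.
Proof.
  intros hp hq npq sum hc.
  pose proof (lincomb_H2_norm a p b q hp hq hc) as e.
  pose proof (lor_gt1 p q hp hq npq) as gt.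
  assert (E : (a * b) * (lor p q - 1) = 0) by nra.
  apply Rmult_integral in E. destruct E; [assumption | lra].
Qed.

Lemma sinh_pos x : 0 < x -> 0 < sinh x.
Proof. intro h. rewrite <- sinh_0. apply sinh_lt; exact h. Qed.

Lemma sinh_nonneg x : 0 <= x -> 0 <= sinh x.
Proof.
  intros [h | <-]; [left; apply sinh_pos; exact h | rewrite sinh_0; lra].
Qed.

(** The hyperbolic identity behind the unit norm of geodesic coefficients. *)
Lemma sinh_add_square s u :
  sinh s * sinh s + sinh u * sinh u + 2 * sinh s * sinh u * cosh (s + u)
  = sinh (s + u) * sinh (s + u).
Proof.
  unfold sinh, cosh. rewrite Ropp_plus_distr, !exp_plus, !exp_Ropp.
  assert (exp s > 0) by apply exp_pos. assert (exp u > 0) by apply exp_pos.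
  field. split; lra.
Qed.

Lemma sinh_ratio_norm s u : 0 < s + u ->
  (sinh s / sinh (s+u)) * (sinh s / sinh (s+u))
  + (sinh u / sinh (s+u)) * (sinh u / sinh (s+u))
  + 2 * (sinh s / sinh (s+u)) * (sinh u / sinh (s+u)) * cosh (s+u) = 1.
Proof.
  intro pos. pose proof (sinh_pos _ pos) as D.
  pose proof (sinh_add_square s u) as I.
  apply (Rmult_eq_reg_r (sinh (s+u) * sinh (s+u))); [|nra].
  rewrite Rmult_1_l. rewrite <- I at 2. field. lra.
Qed.

Section Arcosh.
Variable c : R.
Hypothesis c_ge1 : 1 <= c.

Lemma exp_arcosh : exp (arcosh c) = c + sqrt (c*c - 1).
Proof. unfold arcosh. apply exp_ln. pose proof (sqrt_pos (c*c - 1)). lra. Qed.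

Lemma arcosh_nonneg : 0 <= arcosh c.
Proof.
  destruct (Rle_or_lt 0 (arcosh c)) as [h|h]; [exact h|].
  apply exp_increasing in h. rewrite exp_0, exp_arcosh in h.
  pose proof (sqrt_pos (c*c - 1)). lra.
Qed.

Lemma arcosh_eq0 : arcosh c = 0 -> c = 1.
Proof.
  intro h. pose proof exp_arcosh as e. rewrite h, exp_0 in e.
  pose proof (sqrt_pos (c*c - 1)). lra.
Qed.

Lemma cosh_arcosh : cosh (arcosh c) = c.
Proof.
  unfold cosh. rewrite exp_Ropp, exp_arcosh.
  set (s := sqrt (c*c - 1)).
  assert (s0 : 0 <= s) by apply sqrt_pos.
  assert (ss : s * s = c*c - 1) by (apply sqrt_sqrt; nra).
  assert (inv : / (c + s) = c - s).
  { apply (Rmult_eq_reg_l (c+s)); [|lra]. rewrite Rinv_r by lra. nra. }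
  rewrite inv. field.
Qed.
End Arcosh.

Lemma hdist_facts p q : H2 p -> H2 q ->
  0 <= hdist p q /\ cosh (hdist p q) = lor p q /\ (hdist p q = 0 -> p = q).
Proof.
  intros hp hq. pose proof (reverse_cauchy_schwarz p q hp hq) as [ge eq1].
  unfold hdist. split; [|split].
  - now apply arcosh_nonneg.
  - now apply cosh_arcosh.
  - intro e. apply eq1, arcosh_eq0; assumption.
Qed.

Lemma geodH2_formula p q t : hdist p q <> 0 ->
  geodH2 p q t = lincomb (sinh ((1-t) * hdist p q) / sinh (hdist p q)) p
                         (sinh (t * hdist p q) / sinh (hdist p q)) q.
Proof. intro nz. unfold geodH2. destruct (Req_EM_T (hdist p q) 0); easy. Qed.

Lemma geodH2_degenerate p q t : hdist p q = 0 -> geodH2 p q t = p.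
Proof. intro z. unfold geodH2. destruct (Req_EM_T (hdist p q) 0); easy. Qed.

Lemma lincomb_10 p q : lincomb 1 p 0 q = p.
Proof. destruct p as [[? ?] ?], q as [[? ?] ?]; simpl; f_equal; [f_equal|]; ring. Qed.

Lemma lincomb_01 p q : lincomb 0 p 1 q = q.
Proof. destruct p as [[? ?] ?], q as [[? ?] ?]; simpl; f_equal; [f_equal|]; ring. Qed.

Lemma lincomb_diag a b p : lincomb a p b p = lincomb (a+b) p 0 p.
Proof. destruct p as [[? ?] ?]; simpl; f_equal; [f_equal|]; ring. Qed.

Lemma geodH2_endpoints p q : H2 p -> H2 q ->
  geodH2 p q 0 = p /\ geodH2 p q 1 = q.
Proof.
  intros hp hq. destruct (hdist_facts p q hp hq) as [d0 [_ dz]].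
  destruct (Req_dec (hdist p q) 0) as [z|nz].
  - rewrite !geodH2_degenerate by exact z. split; [reflexivity | exact (dz z)].
  - pose proof (sinh_pos (hdist p q)) as sd.
    rewrite !geodH2_formula by exact nz.
    rewrite Rminus_0_r, Rminus_diag, !Rmult_1_l, !Rmult_0_l, sinh_0.
    replace (sinh (hdist p q) / sinh (hdist p q)) with 1 by (field; lra).
    replace (0 / sinh (hdist p q)) with 0 by (unfold Rdiv; ring).
    split; [apply lincomb_10 | apply lincomb_01].
Qed.

Lemma geodH2_lincomb p q t : H2 p -> H2 q -> 0 <= t <= 1 ->
  exists a b, 0 <= a /\ 0 <= b /\ a*a + b*b + 2*a*b*lor p q = 1 /\
  geodH2 p q t = lincomb a p b q.
Proof.
  intros hp hq ht. destruct (hdist_facts p q hp hq) as [d0 [dc _]].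
  destruct (Req_dec (hdist p q) 0) as [z|nz].
  - exists 1, 0. rewrite geodH2_degenerate, lincomb_10 by exact z.
    repeat split; lra.
  - rewrite geodH2_formula by exact nz. set (d := hdist p q) in *.
    assert (dp : 0 < d) by lra. pose proof (sinh_pos d dp) as sd.
    assert (0 <= sinh ((1-t)*d)) by (apply sinh_nonneg; nra).
    assert (0 <= sinh (t*d)) by (apply sinh_nonneg; nra).
    eexists; eexists; split; [|split; [|split; [|reflexivity]]].
    + apply Rdiv_nonneg; lra.
    + apply Rdiv_nonneg; lra.
    + rewrite <- dc. pose proof (sinh_ratio_norm ((1-t)*d) (t*d)) as N.
      replace ((1-t)*d + t*d) with d in N by ring. apply N. exact dp.
Qed.

Lemma unit_coeff_unique a a' b c : 1 <= c -> 0 <= a -> 0 <= a' -> 0 <= b ->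
  a*a + b*b + 2*a*b*c = 1 -> a'*a' + b*b + 2*a'*b*c = 1 -> a = a'.
Proof.
  intros hc ha ha' hb e e'.
  assert (E : (a' - a) * (a' + a + 2*b*c) = 0) by nra.
  apply Rmult_integral in E. destruct E as [E|E]; [lra|].
  assert (b*c >= 0) by nra. lra.
Qed.

(** Conversely, every unit nonnegative combination of the endpoints is on the
    segment: the time is recovered from b = sinh (t d) / sinh d. *)
Lemma lincomb_seg p q a b : H2 p -> H2 q -> 0 <= a -> 0 <= b ->
  a*a + b*b + 2*a*b*lor p q = 1 -> seg geodH2 p q (lincomb a p b q).
Proof.
  intros hp hq ha hb e. pose proof (lor_ge1 p q hp hq) as hc.
  destruct (hdist_facts p q hp hq) as [d0 [dc dz]].
  destruct (Req_dec (hdist p q) 0) as [z|nz].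
  - specialize (dz z). subst q. rewrite lor_H2 in e by assumption.
    assert (sum : a + b = 1) by nra.
    exists 0. split; [lra|]. rewrite (proj1 (geodH2_endpoints p p hp hp)).
    rewrite lincomb_diag, sum, lincomb_10. reflexivity.
  - set (d := hdist p q) in *. assert (dp : 0 < d) by lra.
    pose proof (sinh_pos d dp) as sd.
    assert (0 <= a*b*lor p q) by (apply Rmult_le_pos; [apply Rmult_le_pos|]; lra).
    assert (b1 : b <= 1) by nra.
    set (r := arcsinh (b * sinh d)).
    assert (Sr : sinh r = b * sinh d) by apply sinh_arcsinh.
    assert (r0 : 0 <= r).
    { destruct (Rle_or_lt 0 r) as [h|h]; [exact h|].
      apply sinh_lt in h. rewrite Sr, sinh_0 in h. nra. }
    assert (r1 : r <= d).
    { destruct (Rle_or_lt r d) as [h|h]; [exact h|].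
      apply sinh_lt in h. rewrite Sr in h. nra. }
    exists (r / d). split.
    { split; [apply Rdiv_nonneg; lra|].
      apply (Rmult_le_reg_r d); [exact dp|]. unfold Rdiv.
      rewrite Rmult_assoc, Rinv_l; lra. }
    rewrite geodH2_formula by exact nz. fold d.
    replace (r / d * d) with r by (field; lra).
    replace ((1 - r/d) * d) with (d - r) by (field; lra).
    rewrite Sr. replace (b * sinh d / sinh d) with b by (field; lra).
    f_equal.
    apply (unit_coeff_unique a _ b (lor p q)); auto.
    + apply Rdiv_nonneg; [apply sinh_nonneg; lra | exact sd].
    + rewrite <- dc. pose proof (sinh_ratio_norm (d - r) r) as N.
      replace (d - r + r) with d in N by ring. rewrite Sr in N.
      replace (b * sinh d / sinh d) with b in N by (field; lra). apply N. lra.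
Qed.

Lemma seg_H2_iff p q x : H2 p -> H2 q ->
  seg geodH2 p q x <->
  H2 x /\ exists a b, 0 <= a /\ 0 <= b /\ x = lincomb a p b q.
Proof.
  intros hp hq. split.
  - intros [t [ht ->]].
    destruct (geodH2_lincomb p q t hp hq ht) as [a [b [ha [hb [e E]]]]].
    rewrite E. split; [apply H2_lincomb; auto|]. exists a, b. auto.
  - intros [hx [a [b [ha [hb ->]]]]].
    apply lincomb_seg; auto. apply lincomb_H2_norm; assumption.
Qed.

Lemma geodH2_mid p q : H2 p -> H2 q ->
  exists k, 0 < k /\ geodH2 p q (1/2) = lincomb k p k q.
Proof.
  intros hp hq. destruct (hdist_facts p q hp hq) as [d0 [_ dz]].
  destruct (Req_dec (hdist p q) 0) as [z|nz].
  - exists (1/2). split; [lra|]. rewrite geodH2_degenerate by exact z.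
    rewrite (dz z), lincomb_diag. replace (1/2 + 1/2) with 1 by field.
    symmetry. apply lincomb_10.
  - rewrite geodH2_formula by exact nz. replace (1 - 1/2) with (1/2) by field.
    exists (sinh (1/2 * hdist p q) / sinh (hdist p q)). split; [|reflexivity].
    apply Rdiv_lt_0_compat; apply sinh_pos; lra.
Qed.

Lemma seg_H2_convex p q : H2 p -> H2 q -> convex H2 geodH2 (seg geodH2 p q).
Proof.
  intros hp hq. split.
  - intros x sx. exact (proj1 (proj1 (seg_H2_iff p q x hp hq) sx)).
  - intros u v x su sv sx.
    destruct (proj1 (seg_H2_iff p q u hp hq) su) as [hu [a1 [b1 [? [? ->]]]]].
    destruct (proj1 (seg_H2_iff p q v hp hq) sv) as [hv [a2 [b2 [? [? ->]]]]].
    destruct (proj1 (seg_H2_iff _ _ x hu hv) sx) as [hx [a [b [? [? ->]]]]].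
    apply seg_H2_iff; auto. split; [exact hx|].
    exists (a*a1 + b*a2), (a*b1 + b*b2). split; [nra | split; [nra|]].
    destruct p as [[? ?] ?], q as [[? ?] ?]; simpl; f_equal; [f_equal|]; ring.
Qed.

Definition comb3 (l : R) (x0 : pt3) (a : R) (p : pt3) (b : R) (q : pt3) : pt3 :=
  let '(x1, y1, z1) := x0 in let '(x2, y2, z2) := p in let '(x3, y3, z3) := q in
  (l*x1 + a*x2 + b*x3, l*y1 + a*y2 + b*y3, l*z1 + a*z2 + b*z3).

Lemma lincomb_lincomb a a1 x0 b1 y1 b a2 b2 y2 :
  lincomb a (lincomb a1 x0 b1 y1) b (lincomb a2 x0 b2 y2) =
  comb3 (a*a1 + b*a2) x0 (a*b1) y1 (b*b2) y2.
Proof.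
  destruct y1 as [[? ?] ?], y2 as [[? ?] ?], x0 as [[? ?] ?];
    simpl; f_equal; [f_equal|]; ring.
Qed.

Lemma comb3_split l x0 r a p b q :
  lincomb l x0 r (lincomb a p b q) = comb3 l x0 (r*a) p (r*b) q.
Proof.
  destruct p as [[? ?] ?], q as [[? ?] ?], x0 as [[? ?] ?];
    simpl; f_equal; [f_equal|]; ring.
Qed.

Lemma comb3_zero l x0 p q : comb3 l x0 0 p 0 q = lincomb l x0 0 p.
Proof.
  destruct p as [[? ?] ?], q as [[? ?] ?], x0 as [[? ?] ?];
    simpl; f_equal; [f_equal|]; ring.
Qed.

Lemma cone_normalize y1 y2 m n : H2 y1 -> H2 y2 -> 0 <= m -> 0 <= n ->
  m + n <> 0 -> exists r, 0 < r /\ H2 (lincomb (m/r) y1 (n/r) y2).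
Proof.
  intros h1 h2 hm hn nz. pose proof (lor_ge1 y1 y2 h1 h2) as c1.
  set (r2 := m*m + n*n + 2*m*n*lor y1 y2).
  assert (r2p : 0 < r2).
  { unfold r2. assert (0 <= m*n*lor y1 y2)
      by (apply Rmult_le_pos; [apply Rmult_le_pos|]; lra).
    assert (0 < m \/ 0 < n) as [|] by lra; nra. }
  set (r := sqrt r2). assert (rp : 0 < r) by (apply sqrt_lt_R0; exact r2p).
  assert (rr : r * r = r2) by (apply sqrt_sqrt; lra).
  exists r. split; [exact rp|].
  apply H2_lincomb; auto; try (apply Rdiv_nonneg; lra).
  apply (Rmult_eq_reg_r (r*r)); [|nra]. rewrite Rmult_1_l.
  transitivity r2; [|exact (eq_sym rr)].
  unfold r2. clearbody r. field. lra.
Qed.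

Lemma drop_H2_convex K x0 : convex H2 geodH2 K -> H2 x0 ->
  convex H2 geodH2 (drop geodH2 x0 K).
Proof.
  intros [KM Kc] hx0. split.
  - intros x [y [Ky sy]]. exact (proj1 (proj1 (seg_H2_iff _ _ x hx0 (KM y Ky)) sy)).
  - intros u v x [y1 [K1 s1]] [y2 [K2 s2]] suv.
    pose proof (KM _ K1) as h1. pose proof (KM _ K2) as h2.
    destruct (proj1 (seg_H2_iff _ _ u hx0 h1) s1) as [hu [a1 [b1 [? [? Eu]]]]].
    destruct (proj1 (seg_H2_iff _ _ v hx0 h2) s2) as [hv [a2 [b2 [? [? Ev]]]]].
    destruct (proj1 (seg_H2_iff _ _ x hu hv) suv) as [hx [a [b [? [? Ex]]]]].
    assert (Ex3 : x = comb3 (a*a1 + b*a2) x0 (a*b1) y1 (b*b2) y2)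
      by (rewrite Ex, Eu, Ev; apply lincomb_lincomb).
    set (l := a*a1 + b*a2) in Ex3. set (m := a*b1) in Ex3. set (n := b*b2) in Ex3.
    assert (0 <= l) by (unfold l; nra).
    assert (0 <= m) by (unfold m; nra). assert (0 <= n) by (unfold n; nra).
    destruct (Req_dec (m + n) 0) as [z|nz].
    + exists y1. split; [exact K1|]. apply seg_H2_iff; auto. split; [exact hx|].
      exists l, 0. split; [lra | split; [lra|]].
      rewrite Ex3. replace m with 0 by lra. replace n with 0 by lra. apply comb3_zero.
    + destruct (cone_normalize y1 y2 m n h1 h2) as [r [rp hw]]; auto.
      set (w := lincomb (m/r) y1 (n/r) y2) in hw.
      assert (Kw : K w).
      { apply (Kc y1 y2); auto. apply seg_H2_iff; auto. split; [exact hw|].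
        exists (m/r), (n/r). split; [|split; [|reflexivity]]; apply Rdiv_nonneg; lra. }
      exists w. split; [exact Kw|]. apply seg_H2_iff; auto. split; [exact hx|].
      exists l, r. split; [lra | split; [lra|]].
      rewrite Ex3. unfold w. rewrite comb3_split.
      replace (r * (m/r)) with m by (field; lra).
      replace (r * (n/r)) with n by (field; lra). reflexivity.
Qed.

Lemma H2_drop_complete : drop_complete H2 geodH2.
Proof.
  apply drop_complete_of_drop_convex.
  - exact geodH2_endpoints.
  - exact drop_H2_convex.
Qed.

Lemma flat_convex C : convex H2 geodH2 C ->
  convex H2R geodH2R (fun Y => C (fst Y) /\ snd Y = 0).
Proof.
  intros [CM Cc]. split.
  - intros [y s] [Cy _]. exact (CM y Cy).
  - intros [u su] [v sv] [x sx] [Cu eu] [Cv ev] [t [ht E]]; simpl in *.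
    unfold geodH2R in E; simpl in E. injection E as Ex Es. subst. split.
    + apply (Cc u v); auto. exists t. auto.
    + ring.
Qed.

(** The counterexample data: the origin o of the hyperboloid and two points
    a, b, linearly independent with o. *)
Definition po : pt3 := (0, 0, 1).
Definition pa : pt3 := (3/4, 0, 5/4).
Definition pb : pt3 := (0, 3/4, 5/4).

Lemma po_H2 : H2 po. Proof. unfold H2, po; split; lra. Qed.
Lemma pa_H2 : H2 pa. Proof. unfold H2, pa; split; lra. Qed.
Lemma pb_H2 : H2 pb. Proof. unfold H2, pb; split; lra. Qed.

Lemma comb3_coords_inj l a b l' a' b' :
  comb3 l po a pa b pb = comb3 l' po a' pa b' pb -> l = l' /\ a = a' /\ b = b'.
Proof.
  unfold comb3, po, pa, pb. intro E. injection E as ez ey ex. lra.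
Qed.

Lemma no_half_point y : seg geodH2 pa pb y ->
  geodH2 po y (1/2) <> geodH2 (geodH2 po pa (1/2)) (geodH2 po pb (1/2)) (1/2).
Proof.
  intros sy E.
  destruct (proj1 (seg_H2_iff _ _ y pa_H2 pb_H2) sy) as [hy [al [be [hal [hbe Ey]]]]].
  destruct (geodH2_mid po pa po_H2 pa_H2) as [k1 [k1p E1]].
  destruct (geodH2_mid po pb po_H2 pb_H2) as [k2 [k2p E2]].
  assert (m1 : H2 (geodH2 po pa (1/2)))
    by (apply (seg_H2_convex po pa po_H2 pa_H2); exists (1/2); split; [lra|reflexivity]).
  assert (m2 : H2 (geodH2 po pb (1/2)))
    by (apply (seg_H2_convex po pb po_H2 pb_H2); exists (1/2); split; [lra|reflexivity]).
  destruct (geodH2_mid _ _ m1 m2) as [k [kp Ek]].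
  destruct (geodH2_mid po y po_H2 hy) as [c [cp Ec]].
  rewrite Ek, Ec, E1, E2, Ey, lincomb_lincomb, comb3_split in E.
  apply comb3_coords_inj in E. destruct E as [el [ea eb]].
  assert (sum : al + be = 1).
  { apply (Rmult_eq_reg_l c); [|lra]. nra. }
  assert (npq : pa <> pb) by (unfold pa, pb; intro h; injection h; lra).
  pose proof (chord_H2_endpoints pa pb al be pa_H2 pb_H2 npq sum) as z.
  rewrite Ey in hy. specialize (z hy).
  assert (0 < c*al) by nra. assert (0 < c*be) by nra. nra.
Qed.

Lemma H2R_not_drop_complete : ~ drop_complete H2R geodH2R.
Proof.
  intro DC.
  set (K := fun Y : pt3 * R => seg geodH2 pa pb (fst Y) /\ snd Y = 0).
  set (x0 := (po, 1)).
  assert (Ka : K (pa, 0)).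
  { split; [|reflexivity]. exists 0. split; [lra|].
    symmetry. apply geodH2_endpoints; [exact pa_H2 | exact pb_H2]. }
  assert (Kb : K (pb, 0)).
  { split; [|reflexivity]. exists 1. split; [lra|].
    symmetry. apply geodH2_endpoints; [exact pa_H2 | exact pb_H2]. }
  set (P1 := geodH2R x0 (pa, 0) (1/2)).
  set (P2 := geodH2R x0 (pb, 0) (1/2)).
  assert (hull : conv H2R geodH2R (fun Y => Y = x0 \/ K Y) (geodH2R P1 P2 (1/2))).
  { apply (conv_two_step _ _ _ x0 (pa, 0) (pb, 0) P1 P2); auto;
      exists (1/2); split; solve [lra | reflexivity]. }
  assert (Kc : convex H2R geodH2R K)
    by exact (flat_convex _ (seg_H2_convex pa pb pa_H2 pb_H2)).
  destruct (proj1 (DC K x0 Kc (ex_intro _ _ Ka) po_H2 _) hull)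
    as [[y s] [[sy s0] [t [ht E]]]].
  simpl in sy, s0. subst s.
  unfold P1, P2, x0, geodH2R in E. simpl in E. injection E as Ef Es.
  assert (t = 1/2) by lra. subst t.
  exact (no_half_point y sy (eq_sym Ef)).
Qed.

Theorem theorem3 :
  drop_complete H2 geodH2 /\ ~ drop_complete H2R geodH2R.
Proof. split; [exact H2_drop_complete | exact H2R_not_drop_complete]. Qed.
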